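(* Let $\mathcal S\subseteq\mathbb{R}^3$ be the subset generated by a pair of distinct lines in the plane. (1) If $\mathcal S$ is an HR-cone but not a unit cone, then $\mathcal S$ has a unique pair of generating lines; writing $\mathcal S=(A,{\bf a})$, these lines are the zero set (degenerate hyperbola) $\{{\bf x}\in\mathbb{R}^2: ({\bf x}-{\bf a})^T(A-I)({\bf x}-{\bf a})=0\}$. (2) $\mathcal S$ is a unit cone if and only if the generating lines for $\mathcal S$ are orthogonal, which holds if and only if the cone matrix of $\mathcal S$ is $I$. In this case, the lines in every pair of generating lines for $\mathcal S$ cross at the same point, and every pair of orthogonal lines crossing at this point generates $\mathcal S$.
   Context: For distinct lines $L_1,L_2$ in the plane, the subset of $\mathbb{R}^3$ generated by them is the set of all points $(x,y,\pm z)$ such that $2z$ is the length of a line segment with one endpoint on $L_1$, the other on $L_2$, and midpoint $(x,y)$; $L_1,L_2$ are then called a pair of generating lines for this set. For a symmetric positive definite $2\times 2$ matrix $A$ and ${\bf a}\in\mathbb{R}^2$, the elliptical cone $(A,{\bf a})$ is $\{(x,y,z)\in\mathbb{R}^3: z^2=({\bf x}-{\bf a})^TA({\bf x}-{\bf a}),\ {\bf x}=(x,y)^T\}$, with cone matrix $A$ (uniquely determined by the set). It is an HR-cone if $\det A=1$, and a unit cone if $A=I$, the $2\times2$ identity matrix. *)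

From HB Require Import structures.
From mathcomp Require Import all_boot all_order all_algebra.
From mathcomp Require Import all_classical all_reals.
Set Implicit Arguments. Unset Strict Implicit. Unset Printing Implicit Defensive.
Import Order.TTheory GRing.Theory Num.Theory.
Local Open Scope ring_scope.
Local Open Scope classical_set_scope.

(* Points of the plane are row vectors 'rV[R]_2; points of R^3 are triples
   ((x, y), z) : R * R * R. *)
Section Defs.
Variable R : realType.

Definition pt (x y : R) : 'rV[R]_2 := \row_(i < 2) (if i == 0 then x else y).

Definition dot (u v : 'rV[R]_2) : R := (u *m v^T) 0 0.

Definition quad (A : 'M[R]_2) (v : 'rV[R]_2) : R := (v *m A *m v^T) 0 0.

Definition line_through (p d : 'rV[R]_2) : set 'rV[R]_2 :=
  [set p + t *: d | t in [set: R]].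

Definition is_line (L : set 'rV[R]_2) : Prop :=
  exists p d : 'rV[R]_2, d != 0 /\ L = line_through p d.

Definition orthogonal_lines (L1 L2 : set 'rV[R]_2) : Prop :=
  exists p1 d1 p2 d2 : 'rV[R]_2, d1 != 0 /\ d2 != 0 /\
    L1 = line_through p1 d1 /\ L2 = line_through p2 d2 /\ dot d1 d2 = 0.

Definition generated (L1 L2 : set 'rV[R]_2) : set (R * R * R) :=
  [set w | exists P Q : 'rV[R]_2, L1 P /\ L2 Q /\
     (2%:R)^-1 *: (P + Q) = pt w.1.1 w.1.2 /\
     (w.2 = (Num.sqrt (dot (P - Q) (P - Q))) / 2%:R \/
      w.2 = - ((Num.sqrt (dot (P - Q) (P - Q))) / 2%:R))].

Definition generating_pair (S : set (R * R * R)) (L1 L2 : set 'rV[R]_2) : Prop :=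
  is_line L1 /\ is_line L2 /\ L1 <> L2 /\ generated L1 L2 = S.

Definition sym_posdef (A : 'M[R]_2) : Prop :=
  A^T = A /\ forall v : 'rV[R]_2, v != 0 -> 0 < quad A v.

Definition elliptical_cone (A : 'M[R]_2) (a : 'rV[R]_2) : set (R * R * R) :=
  [set w | w.2 ^+ 2 = quad A (pt w.1.1 w.1.2 - a)].

Definition is_HR_cone (S : set (R * R * R)) : Prop :=
  exists (A : 'M[R]_2) (a : 'rV[R]_2),
    sym_posdef A /\ \det A = 1 /\ S = elliptical_cone A a.

Definition is_unit_cone (S : set (R * R * R)) : Prop :=
  exists a : 'rV[R]_2, S = elliptical_cone 1%:M a.

End Defs.

From HB Require Import structures.
From mathcomp Require Import all_boot all_order all_algebra.
From mathcomp Require Import all_classical all_reals.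
From mathcomp Require Import ring lra.
Import Order.TTheory GRing.Theory Num.Theory.
Set Implicit Arguments. Unset Strict Implicit.
Local Open Scope ring_scope.
Local Open Scope classical_set_scope.

(* Two non-parallel lines through c with directions d1, d2 generate the
   elliptical cone with vertex c and quadratic form
   |v|^2 + k (d1 x v) (d2 x v), where k = 4 (d1 . d2) / (d1 x d2)^2: the
   midpoint of c + t d1 and c + s d2 is c + (t d1 + s d2) / 2, and the k-term
   turns |t d1 + s d2|^2 into |t d1 - s d2|^2 = |P - Q|^2.  Parallel lines
   generate no cone, and a cone determines its matrix and vertex, so every
   generating pair of the cone (A, a) passes through a and A - I is k times the
   symmetrised product of the forms d1 x _ and d2 x _.  Hence A = I iff
   d1 . d2 = 0; otherwise k <> 0 and the zero set of (x - a)^T (A - I) (x - a)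
   is exactly the union of the two lines, which therefore are unique. *)

Section ConeGeometry.
Variable R : realType.
Implicit Types (u v w x c d e p : 'rV[R]_2) (A B : 'M[R]_2) (L : set 'rV[R]_2).

Local Notation i1 := (@Ordinal 2 1 isT).
Local Notation "v '_0'" := (v ord0 ord0) (at level 2, format "v '_0'").
Local Notation "v '_1'" := (v ord0 i1) (at level 2, format "v '_1'").

Lemma ord2P (i : 'I_2) : i = ord0 \/ i = i1.
Proof. by case: i => [[|[|//]] ?]; [left|right]; apply: val_inj. Qed.

Lemma rowv2P u v : u _0 = v _0 -> u _1 = v _1 -> u = v.
Proof. by move=> e0 e1; apply/rowP => j; case: (ord2P j) => ->. Qed.

Lemma mx2P A B : A ord0 ord0 = B ord0 ord0 -> A ord0 i1 = B ord0 i1 ->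
  A i1 ord0 = B i1 ord0 -> A i1 i1 = B i1 i1 -> A = B.
Proof.
move=> e00 e01 e10 e11; apply/matrixP => i j.
by case: (ord2P i) => ->; case: (ord2P j) => ->.
Qed.

Lemma pt_0 (x y : R) : (pt x y) _0 = x. Proof. by rewrite mxE. Qed.
Lemma pt_1 (x y : R) : (pt x y) _1 = y. Proof. by rewrite mxE. Qed.

Lemma ptK v : pt (v _0) (v _1) = v.
Proof. by apply: rowv2P; rewrite (pt_0, pt_1). Qed.

Lemma dotE u v : dot u v = u _0 * v _0 + u _1 * v _1.
Proof.
rewrite /dot mxE !big_ord_recl big_ord0 !mxE addr0.
by congr (_ * _ + _ * _); congr (_ _ _); apply: val_inj.
Qed.

Lemma quadE A v : quad A v =
  v _0 * v _0 * A ord0 ord0 + v _0 * v _1 * (A ord0 i1 + A i1 ord0) + v _1 * v _1 * A i1 i1.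
Proof.
rewrite /quad mxE !big_ord_recl big_ord0 !mxE !big_ord_recl !big_ord0 /=.
have -> : lift ord0 (ord0 : 'I_1) = i1 by apply: val_inj.
have -> : (0 : 'I_1) = ord0 by apply: val_inj.
ring.
Qed.

Definition cross u v : R := u _0 * v _1 - u _1 * v _0.

Lemma dot_ge0 v : 0 <= dot v v.
Proof. by rewrite dotE -!expr2 addr_ge0 ?sqr_ge0. Qed.

Lemma dot_gt0 v : v != 0 -> 0 < dot v v.
Proof.
move=> nzv; rewrite lt_def dot_ge0 andbT dotE -!expr2 paddr_eq0 ?sqr_ge0 // !sqrf_eq0.
apply: contra nzv => /andP[/eqP v0 /eqP v1].
by apply/eqP/rowv2P; rewrite mxE.
Qed.

Lemma dot_cross_sqr u v : dot u v ^+ 2 + cross u v ^+ 2 = dot u u * dot v v.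
Proof. by rewrite !dotE /cross; ring. Qed.

Lemma cross_neq0 u v : cross u v != 0 -> u != 0 /\ v != 0.
Proof.
by move=> nz; split; apply: contraNneq nz => ->; apply/eqP; rewrite /cross !mxE; ring.
Qed.

Lemma orthogonal_cross_neq0 u v : u != 0 -> v != 0 -> dot u v = 0 -> cross u v != 0.
Proof.
move=> nzu nzv uv0; rewrite -sqrf_eq0.
have -> : cross u v ^+ 2 = dot u u * dot v v by rewrite -dot_cross_sqr uv0; ring.
by rewrite mulf_neq0 // lt0r_neq0 // dot_gt0.
Qed.

Lemma cross_eq0_scale d e : d != 0 -> cross d e = 0 -> exists k, e = k *: d.
Proof.
move=> nzd; rewrite /cross => de0.
have [d0|d0] : d _0 != 0 \/ d _1 != 0.
  case: (eqVneq (d _0) 0) => [d0|]; [right|by left].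
  by apply: contraNneq nzd => d1; apply/eqP/rowv2P; rewrite mxE ?d0 ?d1.
- exists (e _0 / d _0); apply: rowv2P; rewrite !mxE; first by field.
  by apply: (mulfI d0); rewrite (_ : d _0 * e _1 = d _1 * e _0); [field | lra].
- exists (e _1 / d _1); apply: rowv2P; rewrite !mxE; last by field.
  by apply: (mulfI d0); rewrite (_ : d _1 * e _0 = d _0 * e _1); [field | lra].
Qed.

Lemma line_through_self p d : line_through p d p.
Proof. by exists 0 => //; rewrite scale0r addr0. Qed.

Lemma line_through_shift p d c : line_through p d c -> line_through p d = line_through c d.
Proof.
case=> t0 _ <-; apply/seteqP; split => x [t _ <-].
  by exists (t - t0) => //; apply: rowv2P; rewrite !mxE; ring.
by exists (t + t0) => //; apply: rowv2P; rewrite !mxE; ring.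
Qed.

Lemma line_throughP c d x : d != 0 -> line_through c d x <-> cross d (x - c) = 0.
Proof.
move=> nzd; split; first by case=> t _ <-; rewrite /cross !mxE; ring.
by case/(cross_eq0_scale nzd) => t ext; exists t => //; rewrite -ext addrC subrK.
Qed.

Lemma line_through_dir c d e : d != 0 -> e != 0 -> cross d e = 0 ->
  line_through c e = line_through c d.
Proof.
move=> nzd nze /(cross_eq0_scale nzd) [k ekd].
have nzk : k != 0 by apply: contraNneq nze => k0; rewrite ekd k0 scale0r.
rewrite ekd; apply/seteqP; split => x [t _ <-].
  by exists (t * k) => //; rewrite scalerA.
by exists (t / k) => //; rewrite scalerA divfK.
Qed.

Lemma line_through_eq c d e : d != 0 -> e != 0 ->
  line_through c d (c + e) -> line_through c e = line_through c d.
Proof.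
move=> nzd nze /(line_throughP _ _ nzd).
by rewrite addrAC subrr add0r; apply: line_through_dir.
Qed.

Lemma line_through_meet p1 d1 p2 d2 : cross d1 d2 != 0 ->
  exists c, line_through p1 d1 c /\ line_through p2 d2 c.
Proof.
move=> nz; set D := cross d1 d2; set w := p2 - p1.
exists (p1 + (cross w d2 / D) *: d1); split; first by exists (cross w d2 / D).
exists (cross w d1 / D) => //.
by move: nz; rewrite /D /w /cross => nz; apply: rowv2P; rewrite !mxE; field.
Qed.

Lemma quad0 A : quad A 0 = 0.
Proof. by rewrite quadE !mxE; ring. Qed.

Lemma quadN A v : quad A (- v) = quad A v.
Proof. by rewrite !quadE !mxE; ring. Qed.

Lemma quadB A B v : quad (A - B) v = quad A v - quad B v.
Proof. by rewrite !quadE !mxE; ring. Qed.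

Lemma quad1 v : quad 1%:M v = dot v v.
Proof. by rewrite quadE dotE !mxE /=; ring. Qed.

Lemma quad_parallelogram A u v :
  quad A (u + v) + quad A (u - v) = 2 * quad A u + 2 * quad A v.
Proof. by rewrite !quadE !mxE; ring. Qed.

Lemma quad_ge0 A v : sym_posdef A -> 0 <= quad A v.
Proof.
case=> _ posA; case: (eqVneq v 0) => [->|nzv]; first by rewrite quad0.
exact/ltW/posA.
Qed.

Lemma sym_posdef1 : sym_posdef (1%:M : 'M[R]_2).
Proof. by split=> [|v nzv]; [exact: tr_scalar_mx | rewrite quad1 dot_gt0]. Qed.

Lemma sym_mx_quad_inj A B : A^T = A -> B^T = B ->
  (forall v, quad A v = quad B v) -> A = B.
Proof.
move=> symA symB AB.
have a01 := congr1 (fun M : 'M_2 => M ord0 i1) symA.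
have b01 := congr1 (fun M : 'M_2 => M ord0 i1) symB.
have := AB (pt 1 0); have := AB (pt 0 1); have := AB (pt 1 1).
rewrite /= !mxE in a01 b01; rewrite !quadE !(pt_0, pt_1) => e11 e01 e10.
by apply: mx2P; lra.
Qed.

Lemma elliptical_cone_sqrt A a x : sym_posdef A ->
  elliptical_cone A a ((x _0, x _1), Num.sqrt (quad A (x - a))).
Proof. by move=> posA; rewrite /elliptical_cone /= ptK sqr_sqrtr // quad_ge0. Qed.

Lemma elliptical_cone_inj A B a b : sym_posdef A -> B^T = B ->
  elliptical_cone A a = elliptical_cone B b -> A = B /\ a = b.
Proof.
move=> posA symB AaBb.
have quadAB x : quad A (x - a) = quad B (x - b).
  have := elliptical_cone_sqrt a x posA.
  by rewrite AaBb /elliptical_cone /= ptK sqr_sqrtr // quad_ge0.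
have AB : A = B.
  apply: sym_mx_quad_inj posA.1 symB _ => v.
  have := quad_parallelogram B (a - b) v.
  rewrite -[a - b + v]addrAC -[a - b - v]addrAC -!quadAB.
  by rewrite [a + v - a]addrAC [a - v - a]addrAC subrr !add0r quadN quad0; lra.
split=> //; apply/eqP; rewrite -subr_eq0; apply: contraTT isT => nzab.
by have := posA.2 _ nzab; rewrite AB -quadAB subrr quad0 ltxx.
Qed.

Definition cone_coef d1 d2 : R := 4 * dot d1 d2 / cross d1 d2 ^+ 2.

Definition cone_mx d1 d2 : 'M[R]_2 :=
  let k := cone_coef d1 d2 in
  \matrix_(i, j)
    if (i == ord0) && (j == ord0) then 1 + k * (d1 _1 * d2 _1)
    else if (i == i1) && (j == i1) then 1 + k * (d1 _0 * d2 _0)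
    else - k * (d1 _0 * d2 _1 + d1 _1 * d2 _0) / 2.

Lemma cone_mx_sym d1 d2 : (cone_mx d1 d2)^T = cone_mx d1 d2.
Proof. by apply: mx2P; rewrite !mxE. Qed.

Lemma quad_cone_mx d1 d2 v :
  quad (cone_mx d1 d2) v = dot v v + cone_coef d1 d2 * cross d1 v * cross d2 v.
Proof. by rewrite quadE dotE !mxE /= /cross; field. Qed.

Lemma quad_cone_mx_sub1 d1 d2 v :
  quad (cone_mx d1 d2 - 1%:M) v = cone_coef d1 d2 * cross d1 v * cross d2 v.
Proof. by rewrite quadB quad_cone_mx quad1; ring. Qed.

Lemma cone_coef_eq0 d1 d2 : cross d1 d2 != 0 -> (cone_coef d1 d2 == 0) = (dot d1 d2 == 0).
Proof.
move=> nz; rewrite /cone_coef !mulf_eq0 invr_eq0 expf_eq0 (negbTE nz) andbF orbF.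
by rewrite pnatr_eq0.
Qed.

Lemma cone_mx_eq1 d1 d2 : cross d1 d2 != 0 -> cone_mx d1 d2 = 1%:M <-> dot d1 d2 = 0.
Proof.
move=> nz; split=> [E|d0].
- have := congr1 (fun M : 'M_2 => M ord0 ord0 + M i1 i1) E; rewrite !mxE /= => tr.
  have /eqP : cone_coef d1 d2 * dot d1 d2 = 0 by rewrite dotE; lra.
  by rewrite mulf_eq0 cone_coef_eq0 // orbb => /eqP.
- have /eqP k0 : cone_coef d1 d2 == 0 by rewrite cone_coef_eq0 // d0.
  by apply: mx2P; rewrite !mxE /= k0; ring.
Qed.

Lemma quad_cone_mx_half_sum d1 d2 t s : cross d1 d2 != 0 ->
  quad (cone_mx d1 d2) (2^-1 *: (t *: d1 + s *: d2)) =
  dot (t *: d1 - s *: d2) (t *: d1 - s *: d2) / 4.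
Proof.
rewrite /cross => nz.
by rewrite quad_cone_mx /cone_coef !dotE /cross !mxE; field.
Qed.

Lemma sqr_half_sqrt_dotP w (z : R) :
  z = Num.sqrt (dot w w) / 2 \/ z = - (Num.sqrt (dot w w) / 2) <-> z ^+ 2 = dot w w / 4.
Proof.
have <- : (Num.sqrt (dot w w) / 2) ^+ 2 = dot w w / 4.
  by rewrite expr_div_n sqr_sqrtr ?dot_ge0 //; congr (_ / _); ring.
split; first by case=> ->; rewrite ?sqrrN.
by move/eqP; rewrite eqf_sqr => /orP[] /eqP; [left | right].
Qed.

Lemma generated_concurrent_linesP c d1 d2 (w : R * R * R) :
  generated (line_through c d1) (line_through c d2) w <->
  exists t s, pt w.1.1 w.1.2 = c + 2^-1 *: (t *: d1 + s *: d2) /\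
              w.2 ^+ 2 = dot (t *: d1 - s *: d2) (t *: d1 - s *: d2) / 4.
Proof.
have diff t s : c + t *: d1 - (c + s *: d2) = t *: d1 - s *: d2.
  by apply: rowv2P; rewrite !mxE; ring.
split.
- case=> _ [_ [[t _ <-] [[s _ <-] [mid /sqr_half_sqrt_dotP hz]]]].
  exists t, s; rewrite -diff; split=> //.
  by rewrite -mid; apply: rowv2P; rewrite !mxE; field.
- case=> t [s [mid hz]]; exists (c + t *: d1), (c + s *: d2).
  split; first by exists t.
  split; first by exists s.
  split; first by rewrite mid; apply: rowv2P; rewrite !mxE; field.
  by apply/sqr_half_sqrt_dotP; rewrite diff.
Qed.

Lemma generated_concurrent_lines c d1 d2 : cross d1 d2 != 0 ->
  generated (line_through c d1) (line_through c d2) = elliptical_cone (cone_mx d1 d2) c.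
Proof.
move=> nz; apply/seteqP; split=> w; rewrite /elliptical_cone /=.
  case/generated_concurrent_linesP=> t [s [-> ->]].
  by rewrite addrAC subrr add0r quad_cone_mx_half_sum.
set v := pt w.1.1 w.1.2 - c => hz; apply/generated_concurrent_linesP.
have cramer : v = 2^-1 *: ((2 * (cross v d2 / cross d1 d2)) *: d1 +
                           (2 * (cross d1 v / cross d1 d2)) *: d2).
  by move: nz; rewrite /cross => nz; apply: rowv2P; rewrite !mxE; field.
exists (2 * (cross v d2 / cross d1 d2)), (2 * (cross d1 v / cross d1 d2)).
by rewrite -cramer /v addrC subrK hz -quad_cone_mx_half_sum // -cramer.
Qed.

(* If d1 and d2 were parallel, every midpoint would lie on the line through
   (p1 + p2) / 2 with direction d1, so the point off it in the normal
   direction would not be covered, whereas a cone projects onto the plane. *)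
Lemma generated_cone_nonparallel p1 d1 p2 d2 A a : d1 != 0 -> sym_posdef A ->
  generated (line_through p1 d1) (line_through p2 d2) = elliptical_cone A a ->
  cross d1 d2 != 0.
Proof.
move=> nzd1 posA gen; apply/eqP => par.
have := elliptical_cone_sqrt a (2^-1 *: (p1 + p2) + pt (- d1 _1) (d1 _0)) posA.
rewrite -gen => -[_ [_ [[t _ <-] [[s _ <-] [mid _]]]]].
have e0 := congr1 (fun v => v _0) mid; have e1 := congr1 (fun v => v _1) mid.
rewrite /= !mxE /= in e0 e1.
have E0 : s * d2 _0 = - 2 * d1 _1 - t * d1 _0 by lra.
have E1 : s * d2 _1 = 2 * d1 _0 - t * d1 _1 by lra.
have : s * cross d1 d2 = 2 * dot d1 d1.
  have -> : s * cross d1 d2 = d1 _0 * (s * d2 _1) - d1 _1 * (s * d2 _0).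
    by rewrite /cross; ring.
  by rewrite E0 E1 dotE; ring.
by rewrite par mulr0; have := dot_gt0 nzd1; lra.
Qed.

Lemma generating_lines_of_cone L1 L2 A a : is_line L1 -> is_line L2 -> sym_posdef A ->
  generated L1 L2 = elliptical_cone A a ->
  exists d1 d2, [/\ cross d1 d2 != 0, L1 = line_through a d1,
                    L2 = line_through a d2 & A = cone_mx d1 d2].
Proof.
move=> [p1 [d1 [nzd1 ->]]] [p2 [d2 [nzd2 ->]]] posA gen.
have nz := generated_cone_nonparallel nzd1 posA gen.
have [c [c1 c2]] := @line_through_meet p1 d1 p2 d2 nz.
rewrite (line_through_shift c1) (line_through_shift c2) generated_concurrent_lines // in gen *.
have [-> ->] := elliptical_cone_inj posA (cone_mx_sym d1 d2) (esym gen).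
by exists d1, d2.
Qed.

Lemma generated_orthogonal_lines c L1 L2 : orthogonal_lines L1 L2 -> L1 c -> L2 c ->
  generated L1 L2 = elliptical_cone 1%:M c.
Proof.
case=> p1 [d1 [p2 [d2 [nzd1 [nzd2 [-> [-> d0]]]]]]] c1 c2.
have nz := orthogonal_cross_neq0 nzd1 nzd2 d0.
rewrite (line_through_shift c1) (line_through_shift c2) generated_concurrent_lines //.
by rewrite (cone_mx_eq1 nz).2.
Qed.

Lemma unit_cone_orthogonal L1 L2 : is_line L1 -> is_line L2 ->
  is_unit_cone (generated L1 L2) <-> orthogonal_lines L1 L2.
Proof.
move=> l1 l2; split.
- case=> a gen.
  have [d1 [d2 [nz E1 E2 eA]]] := generating_lines_of_cone l1 l2 sym_posdef1 gen.
  have [nzd1 nzd2] := cross_neq0 nz.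
  have d0 := (cone_mx_eq1 nz).1 (esym eA).
  by exists a, d1, a, d2.
- move=> orth; have [p1 [d1 [p2 [d2 [nzd1 [nzd2 [E1 [E2 d0]]]]]]]] := orth.
  have [c [c1 c2]] := @line_through_meet p1 d1 p2 d2 (orthogonal_cross_neq0 nzd1 nzd2 d0).
  by exists c; apply: (generated_orthogonal_lines orth); rewrite ?E1 ?E2.
Qed.

Lemma generating_pair_vertex A a L1 L2 : sym_posdef A ->
  generating_pair (elliptical_cone A a) L1 L2 -> L1 a /\ L2 a.
Proof.
move=> posA [l1 [l2 [_ gen]]].
have [d1 [d2 [_ -> -> _]]] := generating_lines_of_cone l1 l2 posA gen.
by split; apply: line_through_self.
Qed.

Lemma generating_pair_null_set A a L1 L2 : sym_posdef A -> A != 1%:M ->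
  generating_pair (elliptical_cone A a) L1 L2 ->
  L1 `|` L2 = [set x | quad (A - 1%:M) (x - a) = 0].
Proof.
move=> posA A1 [l1 [l2 [_ gen]]].
have [d1 [d2 [nz -> -> eA]]] := generating_lines_of_cone l1 l2 posA gen.
have [nzd1 nzd2] := cross_neq0 nz.
have nzk : cone_coef d1 d2 != 0.
  by rewrite cone_coef_eq0 //; apply: contra_neq A1; rewrite eA => /(cone_mx_eq1 nz).
apply/seteqP; split=> x /=; rewrite eA quad_cone_mx_sub1 -mulrA.
  case=> [/(line_throughP _ _ nzd1) | /(line_throughP _ _ nzd2)] ->;
  by rewrite !(mulr0, mul0r).
move/eqP; rewrite mulf_eq0 (negbTE nzk) /= mulf_eq0 => /orP[] /eqP cross0.
  by left; apply/(line_throughP _ _ nzd1).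
by right; apply/(line_throughP _ _ nzd2).
Qed.

Lemma generating_pair_unique A a L1 L2 L1' L2' : sym_posdef A -> A != 1%:M ->
  generating_pair (elliptical_cone A a) L1 L2 ->
  generating_pair (elliptical_cone A a) L1' L2' ->
  (L1' = L1 /\ L2' = L2) \/ (L1' = L2 /\ L2' = L1).
Proof.
move=> posA A1 gp gp'.
have null := generating_pair_null_set posA A1 gp.
have null' := generating_pair_null_set posA A1 gp'.
case: gp gp' => [l1 [l2 [_ gen]]] [l1' [l2' [ne' gen']]].
have [d1 [d2 [nz E1 E2 _]]] := generating_lines_of_cone l1 l2 posA gen.
have [e1 [e2 [nz' E1' E2' _]]] := generating_lines_of_cone l1' l2' posA gen'.
have [[nzd1 nzd2] [nze1 nze2]] := (cross_neq0 nz, cross_neq0 nz').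
subst L1 L2 L1' L2'.
have meet e : e != 0 -> (line_through a e1 `|` line_through a e2) (a + e) ->
    line_through a e = line_through a d1 \/ line_through a e = line_through a d2.
  move=> nze; rewrite null' -null.
  by case=> [/(line_through_eq nzd1 nze) | /(line_through_eq nzd2 nze)]; [left | right].
have self e : line_through a e (a + e) by exists 1 => //; rewrite scale1r.
have [r1|r1] := meet e1 nze1 (or_introl (self e1));
  have [r2|r2] := meet e2 nze2 (or_intror (self e2));
  rewrite r1 r2 in ne' *; by [left | right].
Qed.

End ConeGeometry.

Theorem theorem3p6 (R : realType) (L1 L2 : set 'rV[R]_2) :
  is_line L1 -> is_line L2 -> L1 <> L2 ->
  (* (1) *)
  ((is_HR_cone (generated L1 L2) /\ ~ is_unit_cone (generated L1 L2)) ->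
     (forall L1' L2' L1'' L2'' : set 'rV[R]_2,
        generating_pair (generated L1 L2) L1' L2' ->
        generating_pair (generated L1 L2) L1'' L2'' ->
        (L1'' = L1' /\ L2'' = L2') \/ (L1'' = L2' /\ L2'' = L1')) /\
     (forall (A : 'M[R]_2) (a : 'rV[R]_2),
        sym_posdef A -> generated L1 L2 = elliptical_cone A a ->
        forall L1' L2' : set 'rV[R]_2,
          generating_pair (generated L1 L2) L1' L2' ->
          L1' `|` L2' = [set x | quad (A - 1%:M) (x - a) = 0])) /\
  (* (2) *)
  ((is_unit_cone (generated L1 L2) <-> orthogonal_lines L1 L2) /\
   (orthogonal_lines L1 L2 <->
      exists (A : 'M[R]_2) (a : 'rV[R]_2),
        sym_posdef A /\ generated L1 L2 = elliptical_cone A a /\ A = 1%:M)) /\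
  (is_unit_cone (generated L1 L2) ->
     exists c : 'rV[R]_2,
       (forall L1' L2' : set 'rV[R]_2,
          generating_pair (generated L1 L2) L1' L2' -> L1' c /\ L2' c) /\
       (forall L1' L2' : set 'rV[R]_2,
          is_line L1' -> is_line L2' -> orthogonal_lines L1' L2' ->
          L1' c -> L2' c -> generated L1' L2' = generated L1 L2)).
Proof.
move=> l1 l2 _.
have unit_orth := unit_cone_orthogonal l1 l2.
have not_unit A a : ~ is_unit_cone (generated L1 L2) ->
    generated L1 L2 = elliptical_cone A a -> A != 1%:M.
  by move=> nu gen; apply/eqP => A1; apply: nu; exists a; rewrite gen A1.
split.
  case=> -[A0 [a0 [posA0 [_ gen0]]]] nu; split.
    by rewrite gen0 => ????; apply: generating_pair_unique posA0 (not_unit _ _ nu gen0).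
  move=> A a posA gen L1' L2'; rewrite gen.
  exact: generating_pair_null_set posA (not_unit _ _ nu gen).
split.
  split=> //; split.
    by case/unit_orth=> a gen; exists 1%:M, a; split; first exact: sym_posdef1.
  by case=> A [a [_ [gen A1]]]; apply/unit_orth; exists a; rewrite gen A1.
case=> a gen; exists a; rewrite gen; split=> L1' L2'.
  by apply: generating_pair_vertex; exact: sym_posdef1.
by move=> _ _ orth c1 c2; apply: generated_orthogonal_lines.
Qed.
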